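(* Let $\mathfrak S$ be a controlled Markov process, $\mathcal G$ its induced abstract $2\frac12$-player game graph, $U\subseteq V_0$, $\pi_0$ a deterministic memoryless strategy of Player 0, and $r:V_0\to\mathbb N\cup\{\infty\}$ the ranking function for $\lozenge U$ under $\pi_0$ (as defined in the context). For every $v\in V_0$ with $r(v)=i\ne\infty$ and $i>0$, writing $\pi_0(v)=(v,u)$, we have $\overline F(v,u)\cap r^{-1}(\infty)=\emptyset$, and moreover at least one of the following holds: (1) $\underline F(v,u)\cap r^{-1}(i-1)\ne\emptyset$; or (2) $\underline F(v,u)=\emptyset$ and $\overline F(v,u)\subseteq r^{-1}(i-1)$.
   Context: CMP: $\mathfrak S=(\mathcal S,\mathcal U,T_{\mathfrak s})$ with $\mathcal S$ a Borel space, $\mathcal U$ finite, $T_{\mathfrak s}(\cdot\mid s,u)$ a probability measure on the Borel sets of $\mathcal S$. $\mathcal P=\langle B_1,\dots,B_\ell\rangle$ is a given measurable partition of $\mathcal S$. Abstraction: $\widehat{\mathcal S}$ is a finite partition of $\mathcal S$ into nonempty cells each contained in a single $B_i$. Functions $\overline F,\underline F:\widehat{\mathcal S}\times\mathcal U\to2^{\widehat{\mathcal S}}$ satisfy $\overline F(\widehat s,u)\supseteq\{\widehat s'\mid\exists s\in\widehat s.\ T_{\mathfrak s}(\widehat s'\mid s,u)>0\}$ and $\underline F(\widehat s,u)\subseteq\{\widehat s'\mid\exists\varepsilon>0\ \forall s\in\widehat s.\ T_{\mathfrak s}(\widehat s'\mid s,u)\ge\varepsilon\}$. Game graph $\mathcal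 G=\langle V,E,\langle V_0,V_1,V_r\rangle\rangle$: $V_0=\widehat{\mathcal S}$, $V_1=\widehat{\mathcal S}\times\mathcal U$, $V_r=\bigcup_{v_1\in V_1}V_r(v_1)$ with $V_r(v_1)=\{v_r\subseteq\widehat{\mathcal S}\mid\underline F(v_1)\subseteq v_r\subseteq\overline F(v_1),\ 1\le|v_r|\le|\underline F(v_1)|+1\}$; $E(v_0)=\{(v_0,u)\mid u\in\mathcal U\}$, $E(v_1)=V_r(v_1)$, $E(v_r)=\{v_0\in V_0\mid v_0\in v_r\}$. Player 0 moves at $V_0$, Player 1 at $V_1$, random uniform successor at $V_r$. Strategies $\pi_i:V^*V_i\to\mathit{Dist}(V)$ are supported on successors; a deterministic memoryless Player 0 strategy assigns each $v_0$ a single successor $\pi_0(v_0)=(v_0,u)$. $P_v^{\pi_0,\pi_1}$ is the induced measure on runs. Formulas over $V_0$ are evaluated on the projection of a run to its $V_0$-vertices: $\lozenge A$ means some projected vertex lies in $A$, and $\bigcirc A$ means the second vertex of the projected run (the next $V_0$-vertex) lies in $A$. Ranking function: $r:V_0\to\mathbb N\cup\{\infty\}$ is defined inductively by $r(v)=0$ if $v\in U$; $r(v)=\infty$ if $\inf_{\pi_1}P_v^{\pi_0,\pi_1}(\mathcal G\models\lozenge U)<1$; and $r(v)=i+1$ if $\min\{n\in\mathbb N\mid\inf_{\pi_1}P_v^{\pi_0,\pi_1}(\mathcal G\models\bigcirc r^{-1}(n))>0\}=i$ and $\inf_{\pi_1}P_v^{\pi_0,\pi_1}(\mathcal G\not\models\bigcirc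 r^{-1}(\infty))=1$, infima over all Player 1 strategies. *)

From HB Require Import structures.
From mathcomp Require Import all_boot all_order all_algebra.
From mathcomp Require Import all_classical all_reals all_analysis.
Set Implicit Arguments. Unset Strict Implicit. Unset Printing Implicit Defensive.
Import Order.TTheory GRing.Theory Num.Theory.
Local Open Scope classical_set_scope.
Local Open Scope ring_scope.

(* Vertices of the abstract 2 1/2-player game graph:
   V0 = abstract states (cells), V1 = cells x actions, Vr = sets of cells. *)
Inductive vertex (Cell Act : finType) : Type :=
| V0v of Cell
| V1v of Cell * Act
| Vrv of {set Cell}.
Arguments V0v {Cell Act}.
Arguments V1v {Cell Act}.
Arguments Vrv {Cell Act}.

Section Game.
Variables (R : realType) (Cell Act : finType).
Variables (Fbar Funder : Cell -> Act -> {set Cell}).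
Variables (U : {set Cell}) (pi0 : Cell -> Act).

Definition Vr (c : Cell) (a : Act) : {set {set Cell}} :=
  [set vr : {set Cell} | [&& Funder c a \subset vr, vr \subset Fbar c a,
                            (0 < #|vr|)%N & (#|vr| <= #|Funder c a|.+1)%N]].

(* A (history-dependent, randomized) Player 1 strategy: given a history
   in V^* V_1 it gives a distribution over successors (which are V_r vertices,
   i.e. sets of cells). *)
Definition strategy1 := seq (vertex Cell Act) -> {set Cell} -> R.

Definition valid1 (pi1 : strategy1) : Prop :=
  forall (h : seq (vertex Cell Act)) (c : Cell) (a : Act),
    [/\ (forall vr, 0 <= pi1 (rcons h (V1v (c, a))) vr),
        \sum_(vr : {set Cell}) pi1 (rcons h (V1v (c, a))) vr = 1 &
        (forall vr, vr \notin Vr c a -> pi1 (rcons h (V1v (c, a))) vr = 0)].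

(* Probability (under pi0, pi1, uniform random vertices) that the projected
   run started after history h at V0-vertex v visits U within n rounds. *)
Fixpoint reachN (pi1 : strategy1) (n : nat) (h : seq (vertex Cell Act))
  (v : Cell) : R :=
  if v \in U then 1 else
  match n with
  | 0 => 0
  | n'.+1 =>
    let h1 := rcons (rcons h (V0v v)) (V1v (v, pi0 v)) in
    \sum_(vr : {set Cell})
       pi1 h1 vr * (#|vr|%:R)^-1 *
       \sum_(w in vr) reachN pi1 n' (rcons h1 (Vrv vr)) w
  end.

(* P_v^{pi0,pi1}(G |= <> U) : the measure of the countable union of the
   increasing events "U reached within n rounds". *)
Definition Preach (pi1 : strategy1) (v : Cell) : R :=
  sup [set reachN pi1 n [::] v | n in [set: nat]].

(* P_v^{pi0,pi1}(G |= O A) : next V0-vertex of the run lies in A. *)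
Definition Pnext (pi1 : strategy1) (A : {set Cell}) (v : Cell) : R :=
  \sum_(vr : {set Cell})
     pi1 [:: V0v v; V1v (v, pi0 v)] vr * (#|vr|%:R)^-1 * #|vr :&: A|%:R.

Definition inf1 (f : strategy1 -> R) : R :=
  inf [set f p | p in [set p | valid1 p]].

(* r^{-1}(n), with None standing for infinity *)
Definition rinv (r : Cell -> option nat) (n : option nat) : {set Cell} :=
  [set c | r c == n].

Definition is_ranking (r : Cell -> option nat) : Prop :=
  forall v : Cell,
  [/\ r v = Some 0%N <-> v \in U,
      r v = None <-> (v \notin U /\ inf1 (fun p => Preach p v) < 1) &
      forall i : nat, r v = Some i.+1 <->
        [/\ v \notin U, ~ (inf1 (fun p => Preach p v) < 1),
            0 < inf1 (fun p => Pnext p (rinv r (Some i)) v),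
            (forall n : nat, (n < i)%N ->
                ~ (0 < inf1 (fun p => Pnext p (rinv r (Some n)) v))) &
            inf1 (fun p => 1 - Pnext p (rinv r None) v) = 1]].

End Game.

(* Write a := pi0 v. Player 1 may answer (v, a) by any single v_r in
   V_r(v, a), playing arbitrarily elsewhere; the next V0-vertex then lies in a
   set A with probability |v_r ∩ A| / |v_r|, so the infimum over her
   strategies is at most that fraction. When r v = i+1 the ranking conditions
   therefore force every v_r in V_r(v, a) to avoid r^-1(∞) and to meet
   r^-1(i). Choosing v_r = {c} ∪ Funder(v, a) for c in Fbar(v, a),
   v_r = Funder(v, a), and v_r = {c} when Funder(v, a) is empty yields the
   claims; these choices are legal because Funder(v, a) ⊆ Fbar(v, a), as every
   cell is nonempty. *)
From Pilot Require Import Defs.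
From HB Require Import structures.
From mathcomp Require Import all_boot all_order all_algebra.
From mathcomp Require Import all_classical all_reals all_analysis.
From mathcomp Require Import lra.
Import Order.TTheory GRing.Theory Num.Theory.
Local Open Scope classical_set_scope.
Local Open Scope ring_scope.

Section RandomVertices.
Local Set Implicit Arguments.
Local Unset Strict Implicit.
Local Close Scope classical_set_scope.
Variables (Cell Act : finType) (Fbar Funder : Cell -> Act -> {set Cell}).
Variables (c : Cell) (a : Act).
Hypothesis Funder_sub : Funder c a \subset Fbar c a.

Lemma setU1_in_Vr c' :
  c' \in Fbar c a -> c' |: Funder c a \in Vr Fbar Funder c a.
Proof.
move=> c'F; rewrite inE finset.subsetUr finset.subUset finset.sub1set c'F.
rewrite Funder_sub /=.
apply/andP; split; first by apply/card_gt0P; exists c'; rewrite setU11.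
by rewrite cardsU1; case: (_ \notin _).
Qed.

Lemma Funder_in_Vr :
  Funder c a != finset.set0 -> Funder c a \in Vr Fbar Funder c a.
Proof. by move=> ne0; rewrite inE subxx Funder_sub card_gt0 ne0 leqnSn. Qed.

Lemma set1_in_Vr c' :
  Funder c a = finset.set0 -> c' \in Fbar c a -> [set c'] \in Vr Fbar Funder c a.
Proof.
by move=> F0 c'F; rewrite inE F0 finset.sub0set finset.sub1set c'F cards1 cards0.
Qed.

Lemma Vr_dichotomy (N M : {set Cell}) :
  (forall t, t \in Vr Fbar Funder c a -> [disjoint t & N]) ->
  (forall t, t \in Vr Fbar Funder c a -> ~~ [disjoint t & M]) ->
  [disjoint Fbar c a & N] /\
  (~~ [disjoint Funder c a & M] \/
   Funder c a = finset.set0 /\ Fbar c a \subset M).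
Proof.
move=> avoidN meetM; split.
  rewrite disjoint_subset; apply/fintype.subsetP => c' c'F.
  by rewrite inE (disjointFr (avoidN _ (setU1_in_Vr c'F))) ?setU11.
have [|FM] := boolP [disjoint Funder c a & M]; last by left.
have [F0 _ | Fne0 FM] := eqVneq (Funder c a) finset.set0; last first.
  by have := meetM _ (Funder_in_Vr Fne0); rewrite FM.
right; split => //; apply/fintype.subsetP => c' c'F.
by have := meetM _ (set1_in_Vr F0 c'F); rewrite disjoints1 negbK.
Qed.

End RandomVertices.

Section PlayerOne.
Local Set Implicit Arguments.
Local Unset Strict Implicit.
Local Close Scope classical_set_scope.
Variables (R : realType) (Cell Act : finType).
Variables (Fbar Funder : Cell -> Act -> {set Cell}) (pi0 : Cell -> Act).

Local Notation strategy1 := (Defs.strategy1 R Cell Act).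
Local Notation valid1 := (@Defs.valid1 R Cell Act Fbar Funder).
Local Notation inf1 := (@Defs.inf1 R Cell Act Fbar Funder).
Local Notation Pnext := (@Defs.Pnext R Cell Act pi0).

Lemma valid1_of_inf1_neq0 (f : strategy1 -> R) :
  inf1 f != 0 -> exists p, valid1 p.
Proof.
move=> f_neq0; apply: contrapT => no_valid; move: f_neq0.
rewrite /Defs.inf1.
suff -> : ([set f p | p in [set p | valid1 p]] = set0)%classic.
  by rewrite inf0 eqxx.
by apply/seteqP; split => // x [p p_valid _]; apply: no_valid; exists p.
Qed.

Lemma inf1_le (f : strategy1 -> R) p :
  (forall q, valid1 q -> 0 <= f q) -> valid1 p -> inf1 f <= f p.
Proof.
move=> f_ge0 p_valid; apply: ge_inf; last by exists p.
by exists 0 => _ [q q_valid <-]; apply: f_ge0.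
Qed.

Lemma Pnext_ge0 p A v : valid1 p -> 0 <= Pnext p A v.
Proof.
move=> /(_ [:: V0v v] v (pi0 v)) [p_ge0 _ _].
by apply: sumr_ge0 => vr _; rewrite !mulr_ge0.
Qed.

Lemma Pnext_le1 p A v : valid1 p -> Pnext p A v <= 1.
Proof.
move=> /(_ [:: V0v v] v (pi0 v)) [p_ge0 p_sum1 _].
rewrite -[leRHS]p_sum1 /=; apply: ler_sum => vr _.
rewrite -mulrA ler_piMr //.
have [->|vr_ne0] := eqVneq #|vr| 0%N; first by rewrite invr0 mul0r.
by rewrite ler_pdivrMl ?ltr0n ?lt0n // mulr1 ler_nat subset_leq_card ?subsetIl.
Qed.

Definition ends_at (c : Cell) (a : Act) (h : seq (vertex Cell Act)) : bool :=
  if last (V0v c) h is V1v ca then ca == (c, a) else false.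

Definition answer_with (v : Cell) (target : {set Cell}) (p : strategy1) :
    strategy1 :=
  fun h vr => if ends_at v (pi0 v) h then (vr == target)%:R else p h vr.

Lemma valid1_answer_with v target p :
  target \in Vr Fbar Funder v (pi0 v) -> valid1 p ->
  valid1 (answer_with v target p).
Proof.
move=> target_Vr p_valid h c a; rewrite /answer_with /ends_at last_rcons.
case: eqP => [[-> ->] | _]; last exact: p_valid.
split=> [vr | | vr]; first by rewrite ler0n.
  by rewrite (bigD1 target) //= eqxx big1 ?addr0 // => vr /negbTE ->.
by case: eqP => [->|//]; rewrite target_Vr.
Qed.

Lemma Pnext_answer_with v target p A :
  Pnext (answer_with v target p) A v = #|target :&: A|%:R / #|target|%:R.
Proof.
have at_root : ends_at v (pi0 v) [:: V0v v; V1v (v, pi0 v)] := eqxx _.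
rewrite /Defs.Pnext /answer_with at_root (bigD1 target) //= big1 => [|vr].
  by rewrite addr0 eqxx mul1r mulrC.
by move=> /negbTE ->; rewrite !mul0r.
Qed.

Lemma Vr_disjoint_of_inf1_Pnext_compl v A target :
  inf1 (fun p => 1 - Pnext p A v) = 1 ->
  target \in Vr Fbar Funder v (pi0 v) -> [disjoint target & A].
Proof.
move=> inf_eq1 target_Vr.
have compl_ge0 q : valid1 q -> 0 <= 1 - Pnext q A v.
  by move=> q_valid; rewrite subr_ge0 Pnext_le1.
have inf_neq0 : inf1 (fun p => 1 - Pnext p A v) != 0.
  by rewrite inf_eq1 oner_neq0.
have [p p_valid] := valid1_of_inf1_neq0 inf_neq0.
have := inf1_le compl_ge0 (valid1_answer_with target_Vr p_valid).
rewrite inf_eq1 Pnext_answer_with => le_compl.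
have frac_le0 : #|target :&: A|%:R / #|target|%:R <= 0 :> R by lra.
have target_gt0 : (0 < #|target|)%N by move: target_Vr; rewrite inE => /and4P[].
move: frac_le0; rewrite ler_pdivrMr ?ltr0n // mul0r lern0.
by rewrite cards_eq0 setI_eq0.
Qed.

Lemma Vr_meets_of_inf1_Pnext_gt0 v A target :
  0 < inf1 (fun p => Pnext p A v) ->
  target \in Vr Fbar Funder v (pi0 v) -> ~~ [disjoint target & A].
Proof.
move=> inf_gt0 target_Vr.
have [p p_valid] := valid1_of_inf1_neq0 (lt0r_neq0 inf_gt0).
have := inf1_le (fun q => @Pnext_ge0 q A v)
  (valid1_answer_with target_Vr p_valid).
rewrite Pnext_answer_with -setI_eq0 -cards_eq0 => le_frac.
apply: contraTN inf_gt0 => /eqP card0.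
by rewrite -leNgt (le_trans le_frac) // card0 mul0r.
Qed.

Variable U : {set Cell}.

Lemma is_ranking_succ r v i :
  is_ranking R Fbar Funder U pi0 r ->
  Funder v (pi0 v) \subset Fbar v (pi0 v) -> r v = Some i.+1 ->
  [disjoint Fbar v (pi0 v) & rinv r None] /\
  (~~ [disjoint Funder v (pi0 v) & rinv r (Some i)] \/
   Funder v (pi0 v) = finset.set0 /\ Fbar v (pi0 v) \subset rinv r (Some i)).
Proof.
move=> r_ranking Funder_sub rv.
have [_ _ /(_ i) [/(_ rv) [_ _ next_gt0 _ avoid_inf] _]] := r_ranking v.
apply: (Vr_dichotomy Funder_sub) => t t_Vr.
  exact: Vr_disjoint_of_inf1_Pnext_compl avoid_inf t_Vr.
exact: Vr_meets_of_inf1_Pnext_gt0 next_gt0 t_Vr.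
Qed.

End PlayerOne.

Lemma Funder_subset_Fbar {d : measure_display} {S : measurableType d}
  {R : realType} {Act : finType} {T : S -> Act -> probability S R}
  {Cell : finType} {cell : S -> Cell}
  (cell_nonempty : forall c : Cell, exists s : S, cell s = c)
  {Fbar Funder : Cell -> Act -> {set Cell}}
  (Fbar_support : forall (c : Cell) (a : Act) (c' : Cell),
     (exists s : S, cell s = c /\ (0 < T s a (cell @^-1` [set c']))%E) ->
     c' \in Fbar c a)
  (Funder_bounded_below : forall (c : Cell) (a : Act) (c' : Cell),
     c' \in Funder c a ->
     exists eps : R, 0 < eps /\
       forall s : S, cell s = c -> (eps%:E <= T s a (cell @^-1` [set c']))%E)
  (c : Cell) (a : Act) :
  Funder c a \subset Fbar c a.
Proof.
apply/fintype.subsetP => c' c'F; apply: Fbar_support.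
have [eps [eps_gt0 T_ge_eps]] := Funder_bounded_below _ _ _ c'F.
have [s cell_s] := cell_nonempty c.
by exists s; split=> //; apply: lt_le_trans (T_ge_eps s cell_s); rewrite lte_fin.
Qed.

Theorem lemma4
  (d : measure_display) (S : measurableType d) (R : realType) (Act : finType)
  (T : S -> Act -> probability S R)
  (B : finType) (block : S -> B)
  (hB : forall b : B, measurable (block @^-1` [set b]))
  (Cell : finType) (cell : S -> Cell)
  (hcell_meas : forall c : Cell, measurable (cell @^-1` [set c]))
  (hcell_ne : forall c : Cell, exists s : S, cell s = c)
  (hcell_block : forall s s' : S, cell s = cell s' -> block s = block s')
  (Fbar Funder : Cell -> Act -> {set Cell})
  (hFbar : forall (c : Cell) (a : Act) (c' : Cell),
     (exists s : S, cell s = c /\ (0 < T s a (cell @^-1` [set c']))%E) ->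
     c' \in Fbar c a)
  (hFunder : forall (c : Cell) (a : Act) (c' : Cell), c' \in Funder c a ->
     exists eps : R, 0 < eps /\
       forall s : S, cell s = c -> (eps%:E <= T s a (cell @^-1` [set c']))%E)
  (U : {set Cell}) (pi0 : Cell -> Act) (r : Cell -> option nat)
  (hr : is_ranking R Fbar Funder U pi0 r)
  (v : Cell) (i : nat) :
  r v = Some i -> (0 < i)%N ->
  Fbar v (pi0 v) :&: rinv r None = finset.set0 /\
  (Funder v (pi0 v) :&: rinv r (Some i.-1) != finset.set0 \/
   (Funder v (pi0 v) = finset.set0 /\ Fbar v (pi0 v) \subset rinv r (Some i.-1))).
Proof.
move=> rv; case: i rv => [//|i] rv _.
have Funder_sub := Funder_subset_Fbar hcell_ne hFbar hFunder v (pi0 v).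
have [avoid_inf meet_next] := is_ranking_succ hr Funder_sub rv.
by split; [apply/eqP|]; rewrite setI_eq0.
Qed.
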